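(* Consider an instance with $n$ agents, $m$ divisible items and binary additive valuations (notation as in the context), and let $d$ be a real number. Then the set of items $o$ such that $x_{o,i}>0$ for some $i\in\mathsf{layer}^*_d$ is the same for every stable fractional allocation $x$. Moreover, this set consists of complete items only: for every such item $o$ and every stable $x$, $\sum_{i\in\mathsf{layer}^*_d}x_{o,i}=1$.
   Context: Agents $[n]$, items $[m]$; each agent $i$ has a set $L_i\subseteq[m]$ of liked items. A fractional allocation is a matrix $x=(x_{o,i})$ with $x_{o,i}\ge0$ and $\sum_i x_{o,i}\le1$ for each item $o$; agent $i$'s value is $\sum_{o\in L_i}x_{o,i}$. $x$ is clean if $x_{o,i}=0$ whenever $o\notin L_i$, and max-USW if it maximizes the sum of agents' values. Throughout, allocations are clean and max-USW. Profile $(h_1,\dots,h_n)$ with $h_i=\sum_o x_{o,i}$. A transfer $u\to v$: distinct agents $u=i_1,\dots,i_k=v$ ($k\ge2$), items $o_1,\dots,o_{k-1}$ with $x_{o_l,i_l}>0$ and $o_l\in L_{i_{l+1}}$, amount $0<\Delta\le\min_l x_{o_l,i_l}$, moving $\Delta$ of $o_l$ from $i_l$ to $i_{l+1}$; narrowing if $h_u-\Delta\ge h_v+\Delta$. $x$ is stable if it admits no narrowing transfer. All stable fractional allocations have the same profile; for real $d$, $\mathsf{layer}^*_d=\{i: h_i=d\}$ where $h$ is this common profile. *)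

From HB Require Import structures.
From mathcomp Require Import all_boot all_order all_algebra.
Set Implicit Arguments. Unset Strict Implicit. Unset Printing Implicit Defensive.
Import Order.TTheory GRing.Theory Num.Theory.
Local Open Scope ring_scope.

Section Defs.
Variables (R : realFieldType) (n m : nat) (L : 'I_n -> {set 'I_m}).

(* x o i = fraction of item o given to agent i *)
Definition frac_alloc (x : 'I_m -> 'I_n -> R) : Prop :=
  (forall o i, 0 <= x o i) /\ (forall o, \sum_(i < n) x o i <= 1).

Definition clean (x : 'I_m -> 'I_n -> R) : Prop :=
  forall o i, o \notin L i -> x o i = 0.

Definition value (x : 'I_m -> 'I_n -> R) (i : 'I_n) : R :=
  \sum_(o in L i) x o i.

Definition usw (x : 'I_m -> 'I_n -> R) : R := \sum_(i < n) value x i.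

Definition max_usw (x : 'I_m -> 'I_n -> R) : Prop :=
  frac_alloc x /\ forall y, frac_alloc y -> usw y <= usw x.

Definition profile (x : 'I_m -> 'I_n -> R) (i : 'I_n) : R :=
  \sum_(o < m) x o i.

(* A transfer along distinct agents a_0,...,a_{k+1} (so at least 2 agents)
   and items b_0,...,b_k: item b_l is held by a_l and liked by a_{l+1};
   amount Delta with 0 < Delta <= x_{b_l,a_l}. *)
Definition narrowing_transfer (x : 'I_m -> 'I_n -> R) : Prop :=
  exists (k : nat) (a : 'I_k.+2 -> 'I_n) (b : 'I_k.+1 -> 'I_m) (D : R),
    injective a /\
    (forall l : 'I_k.+1, 0 < x (b l) (a (widen_ord (leqnSn _) l))) /\
    (forall l : 'I_k.+1, b l \in L (a (lift ord0 l))) /\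
    0 < D /\
    (forall l : 'I_k.+1, D <= x (b l) (a (widen_ord (leqnSn _) l))) /\
    profile x (a ord0) - D >= profile x (a ord_max) + D.

Definition stable (x : 'I_m -> 'I_n -> R) : Prop := ~ narrowing_transfer x.

Definition good_stable (x : 'I_m -> 'I_n -> R) : Prop :=
  [/\ frac_alloc x, clean x, max_usw x & stable x].

Definition layer (x : 'I_m -> 'I_n -> R) (d : R) : {set 'I_n} :=
  [set i | profile x i == d].

Definition touched (x : 'I_m -> 'I_n -> R) (S : {set 'I_n}) : {set 'I_m} :=
  [set o | [exists i in S, 0 < x o i]].

End Defs.

From mathcomp Require Import all_boot all_order all_algebra.
From mathcomp Require Import lra.
Set Implicit Arguments. Unset Strict Implicit. Unset Printing Implicit Defensive.
Import Order.TTheory GRing.Theory Num.Theory.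
Local Open Scope ring_scope.

(* Stability forbids one-step transfers, so an agent holding part of an item
   has profile at most that of every agent who likes it; max-USW forces every
   liked item to be fully allocated.  Hence if a stable x gives part of an item
   to a superlevel set S of its profile, every stable y gives all of that item
   to S, and summing over items, the x-profile sums to at most the y-profile
   on S.  At the largest value where two stable profiles disagree this is
   impossible, so all stable allocations share one profile h.  Then any two
   holders of an item, in x or in y, like it and so have equal h-values: an
   item touched by layer d is given entirely to layer d. *)

Section StableAllocations.
Variables (R : realFieldType) (n m : nat) (L : 'I_n -> {set 'I_m}).
Implicit Types x y z : 'I_m -> 'I_n -> R.

Lemma clean_holder_likes x o i : clean L x -> 0 < x o i -> o \in L i.
Proof. by move=> cx; apply: contraTT => /cx ->; rewrite ltxx. Qed.

Lemma narrowing_single_step x o i j D :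
  i != j -> 0 < D -> D <= x o i -> o \in L j ->
  profile x j + D <= profile x i - D -> narrowing_transfer L x.
Proof.
move=> nij D0 Dx oLj hD.
exists 0%N, (fun t : 'I_2 => if t == ord0 then i else j), (fun=> o), D.
have first_agent (l : 'I_1) :
    (if widen_ord (leqnSn 1) l == ord0 then i else j) = i by rewrite (ord1 l).
repeat split=> //.
- move=> [[|[|?]] ?] [[|[|?]] ?] //= eq_ij;
    by [apply: val_inj | rewrite eq_ij eqxx in nij].
- by move=> l; rewrite first_agent (lt_le_trans D0).
- by move=> l; rewrite first_agent.
Qed.

Lemma stable_holder_profile_le x o i j :
  stable L x -> 0 < x o i -> o \in L j -> profile x i <= profile x j.
Proof.
move=> sx xoi oLj; have [->//|nij] := eqVneq i j.
rewrite leNgt; apply/negP => hji; apply: sx.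
pose D := Num.min (x o i) ((profile x i - profile x j) / 2).
apply: (@narrowing_single_step x o i j D nij).
- by rewrite lt_min xoi /=; lra.
- by rewrite ge_min lexx.
- by [].
- have : D <= (profile x i - profile x j) / 2 by rewrite ge_min lexx orbT.
  lra.
Qed.

Definition add_share x o j e : 'I_m -> 'I_n -> R :=
  fun o' i => x o' i + (if (o' == o) && (i == j) then e else 0).

Lemma sum_add_share x o j e o' :
  \sum_i add_share x o j e o' i = \sum_i x o' i + (if o' == o then e else 0).
Proof.
rewrite big_split /=; congr (_ + _).
by rewrite (bigD1 j) //= eqxx andbT big1 ?addr0 // => i /negPf ->; rewrite andbF.
Qed.

Lemma usw_add_share x o j e :
  o \in L j -> usw L (add_share x o j e) = usw L x + e.
Proof.
move=> oLj; rewrite /usw /value.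
under eq_bigr => i _ do rewrite big_split /=.
rewrite big_split /=; congr (_ + _).
rewrite (bigD1 j) //= (bigD1 o oLj) /= !eqxx /= big1 => [|o' /andP[_ /negPf ->] //].
by rewrite addr0 big1 ?addr0 // => i /negPf ij; apply: big1 => o' _; rewrite ij andbF.
Qed.

Lemma max_usw_liked_full x o j : max_usw L x -> o \in L j -> \sum_i x o i = 1.
Proof.
move=> [[x_ge0 x_le1] x_max] oLj; set s := \sum_i x o i.
have s_le1 : s <= 1 by exact: x_le1.
apply/eqP; rewrite eq_le s_le1 leNgt; apply/negP => s_lt1.
have : frac_alloc (add_share x o j (1 - s)).
  split=> [o' i | o']; rewrite ?sum_add_share; last first.
    by have := x_le1 o'; case: eqP => [->|_]; rewrite /s; lra.
  by rewrite /add_share; case: ifP => _; rewrite ?addr0 //; apply: addr_ge0 => //; lra.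
by move/x_max; rewrite usw_add_share //; lra.
Qed.

Section Comparison.
Variables x y : 'I_m -> 'I_n -> R.
Hypotheses (gx : good_stable L x) (gy : good_stable L y).

Lemma superlevel_share_le c o :
  \sum_(k | c <= profile x k) x o k <= \sum_(k | c <= profile x k) y o k.
Proof.
case: gx gy => [[x_ge0 x_le1] cx _ sx] [[y_ge0 _] cy my _].
have [/existsP[i /andP[ci xoi]] | none] :=
  boolP [exists k, (c <= profile x k) && (0 < x o k)].
  have oLi := clean_holder_likes cx xoi.
  have -> : \sum_(k | c <= profile x k) y o k = 1.
    rewrite -(max_usw_liked_full my oLi) [RHS](bigID (fun k => c <= profile x k)).
    rewrite /= [X in _ = _ + X]big1 ?addr0 // => k; apply: contraNeq => yok.
    have yok_gt0 : 0 < y o k by rewrite lt_def yok y_ge0.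
    exact: le_trans ci (stable_holder_profile_le sx xoi (clean_holder_likes cy yok_gt0)).
  apply: le_trans (x_le1 o); rewrite [X in _ <= X](bigID (fun k => c <= profile x k)).
  by rewrite /= lerDl sumr_ge0.
rewrite big1 ?sumr_ge0 // => k ck; apply/eqP; rewrite eq_le x_ge0 andbT leNgt.
by apply: contra none => xok; apply/existsP; exists k; rewrite ck.
Qed.

Lemma superlevel_profile_sum_le c :
  \sum_(k | c <= profile x k) profile x k <= \sum_(k | c <= profile x k) profile y k.
Proof.
rewrite /profile (exchange_big _ _ _ _ _ (fun k o => x o k)).
rewrite (exchange_big _ _ _ _ _ (fun k o => y o k)).
by apply: ler_sum => o _; apply: superlevel_share_le.
Qed.

Lemma profile_le_at_top_disagreement u :
  (forall i, profile x i != profile y i ->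
     Num.max (profile x i) (profile y i) <= Num.max (profile x u) (profile y u)) ->
  profile x u <= profile y u.
Proof.
move=> top; rewrite leNgt; apply/negP => yu_lt; set c := profile x u.
have y_le_x k : c <= profile x k -> profile y k <= profile x k.
  move=> ck; have [->//|ne] := eqVneq (profile x k) (profile y k).
  have := top k ne; rewrite (max_idPl (ltW yu_lt)) ge_max => /andP[_ yk_le_c].
  exact: le_trans yk_le_c ck.
have := superlevel_profile_sum_le c; apply/negP; rewrite -ltNge.
rewrite (bigD1 u) // [X in _ < X](bigD1 u) //=.
by apply: ltr_leD => //; apply: ler_sum => k /andP[ck _]; apply: y_le_x.
Qed.

End Comparison.

Lemma stable_profile_unique x y :
  good_stable L x -> good_stable L y -> profile x =1 profile y.
Proof.
move=> gx gy i0; apply/eqP/negPn/negP => ne0.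
pose gap i := Num.max (profile x i) (profile y i).
pose P := [pred i | profile x i != profile y i].
have [u ne_u top] := @arg_maxP _ _ _ _ P gap ne0.
have top' i : P i -> gap i <= gap u by exact: top.
move: ne_u; rewrite inE eq_le (profile_le_at_top_disagreement gx gy top') /=.
apply/negP/negPn/(profile_le_at_top_disagreement gy gx) => i.
by rewrite eq_sym => /top'; rewrite /gap maxC [X in _ <= X]maxC.
Qed.

Lemma holders_profile_eq x y o i k :
  good_stable L x -> good_stable L y -> 0 < x o i -> 0 < y o k ->
  profile y k = profile x i.
Proof.
move=> gx gy xoi yok; have exy := stable_profile_unique gx gy.
case: gx gy => _ cx _ sx [_ cy _ sy].
apply/eqP; rewrite eq_le exy.
rewrite (stable_holder_profile_le sy yok (clean_holder_likes cx xoi)) /=.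
by rewrite -!exy (stable_holder_profile_le sx xoi (clean_holder_likes cy yok)).
Qed.

Lemma layer_holder_full z x y d o i :
  good_stable L z -> good_stable L x -> good_stable L y ->
  i \in layer z d -> 0 < x o i -> \sum_(k in layer z d) y o k = 1.
Proof.
move=> gz gx gy iL xoi; case: (gx) (gy) => _ cx _ _ [[y_ge0 _] _ my _].
rewrite -(max_usw_liked_full my (clean_holder_likes cx xoi)).
rewrite [RHS](bigID (mem (layer z d))) /= [X in _ = _ + X]big1 ?addr0 // => k.
apply: contraNeq => yok; have yok_gt0 : 0 < y o k by rewrite lt_def yok y_ge0.
move: iL; rewrite !inE (stable_profile_unique gz gy k).
by rewrite (holders_profile_eq gx gy xoi yok_gt0) -(stable_profile_unique gz gx).
Qed.

Lemma touched_layer_sub z x y d :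
  good_stable L z -> good_stable L x -> good_stable L y ->
  touched x (layer z d) \subset touched y (layer z d).
Proof.
move=> gz gx gy; apply/subsetP => o; rewrite !inE => /existsP[i /andP[iL xoi]].
case: (gy) => [[y_ge0 _] _ _ _].
have : \sum_(k in layer z d) y o k != 0.
  by rewrite (layer_holder_full gz gx gy iL xoi) oner_eq0.
rewrite psumr_neq0 => [/hasP[k _ /andP[kL yok]]|k _]; last exact: y_ge0.
by apply/existsP; exists k; rewrite kL yok.
Qed.

End StableAllocations.

Theorem lemma5 (R : realFieldType) (n m : nat) (L : 'I_n -> {set 'I_m})
    (d : R) (z x y : 'I_m -> 'I_n -> R) :
  good_stable L z -> good_stable L x -> good_stable L y ->
  touched x (layer z d) = touched y (layer z d) /\
  (forall o, o \in touched x (layer z d) ->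
     \sum_(i in layer z d) x o i = 1).
Proof.
move=> gz gx gy; split.
  by apply/eqP; rewrite eqEsubset !(touched_layer_sub d gz).
move=> o; rewrite inE => /existsP[i /andP[iL xoi]].
exact: (layer_holder_full gz gx gx iL xoi).
Qed.
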